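(* If $G$ is a connected chordal graph, then $d_G(s,t)=\lambda_G(s,t)$ for every $s,t\in V(G)$.
   Context: Rendezvous game with adversaries. Let $G$ be a finite, simple, undirected, connected graph, let $s,t\in V(G)$ and let $k\ge 1$ be an integer. Two players play: Facilitator, who controls two agents $R$ and $J$ initially placed on $s$ and $t$ respectively, and Divider, who controls $k$ agents $D_1,\dots,D_k$ which Divider initially places on vertices of $V(G)\setminus\{s,t\}$ of his choice (several agents may share a vertex). After the initial placement the players alternate moves, Facilitator moving first. In a move, the player moves each of his agents to an adjacent vertex or leaves it where it is; no agent may be moved to a vertex currently occupied by an agent of the opponent. Both players have full information. Facilitator wins if at some moment $R$ and $J$ occupy the same vertex; Divider wins if this never happens. $d_G(s,t)$ is the minimum $k$ such that Divider with $k$ agents has a winning strategy on $G$ against Facilitator starting from $s$ and $t$; $d_G(s,t)=+\infty$ if $s=t$ or $s,t$ are adjacent. $\lambda_G(s,t)$ is the minimum size of a set $S\subseteq V(G)\setminus\{s,t\}$ such that $s$ and $t$ lie in different connected components of $G-S$; $\lambda_G(s,t)=+\infty$ if $s=t$ or $s,t$ are adjacent. A graph is chordal if it has no induced cycle on at least 4 vertices. *)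

(* Graph = symmetric irreflexive relation e on a finType T. *)
From mathcomp Require Import all_boot.
Set Implicit Arguments. Unset Strict Implicit. Unset Printing Implicit Defensive.

Section Rendezvous.
Variables (T : finType) (e : rel T).

Definition simple_graph := symmetric e /\ irreflexive e.
Definition connected_graph := forall x y : T, connect e x y.

Definition induced_cycle (c : seq T) : Prop :=
  [/\ 4 <= size c, uniq c &
      forall (x0 : T) i j, i < size c -> j < size c ->
        e (nth x0 c i) (nth x0 c j) =
        (j == i.+1 %% size c) || (i == j.+1 %% size c)].

Definition chordal := forall c : seq T, ~ induced_cycle c.

(* one step of an agent: stay or move to an adjacent vertex *)
Definition step (x y : T) : bool := (x == y) || e x y.

(* vertex v occupied by some Divider agent at placement d *)
Definition occupied k (d : {ffun 'I_k -> T}) (v : T) : bool := [exists i, d i == v].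

(* Divider's placement after n rounds: d0 initially; after Facilitator's
   (n'+1)-th move, Divider answers via his strategy sigma applied to the
   full history [:: (r 0, j 0); ...; (r n'.+1, j n'.+1)] of Facilitator's positions
   (Divider's own past positions are determined by this history). *)
Definition dpos k (d0 : {ffun 'I_k -> T}) (sigma : seq (T * T) -> {ffun 'I_k -> T})
    (r j : nat -> T) (n : nat) : {ffun 'I_k -> T} :=
  if n is n'.+1 then sigma (mkseq (fun i => (r i, j i)) n'.+2) else d0.

(* Divider has a winning strategy with k agents: an initial placement d0
   avoiding s and t and a (history-dependent) strategy sigma such that, against
   every legal sequence of Facilitator moves, all of Divider's moves are legal
   and R and J never meet. *)
Definition divider_wins (k : nat) (s t : T) : Prop :=
  exists (d0 : {ffun 'I_k -> T}) (sigma : seq (T * T) -> {ffun 'I_k -> T}),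
    (forall i, d0 i != s /\ d0 i != t) /\
    forall r j : nat -> T, r 0 = s -> j 0 = t ->
    forall N,
      (forall m, m < N ->
         [/\ step (r m) (r m.+1), ~~ occupied (dpos d0 sigma r j m) (r m.+1),
             step (j m) (j m.+1) & ~~ occupied (dpos d0 sigma r j m) (j m.+1)]) ->
      r N != j N /\
      (forall m, m < N -> forall i,
         [/\ step (dpos d0 sigma r j m i) (dpos d0 sigma r j m.+1 i),
             dpos d0 sigma r j m.+1 i != r m.+1 &
             dpos d0 sigma r j m.+1 i != j m.+1]).

(* "d_G(s,t) = v" where None stands for +infinity:
   +infinity if s = t or s,t adjacent; otherwise the least k >= 1 such that
   Divider with k agents wins (+infinity if there is none). *)
Definition d_G_is (s t : T) (v : option nat) : Prop :=
  if (s == t) || e s t then v = None else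
  match v with
  | None => forall k, 1 <= k -> ~ divider_wins k s t
  | Some m => [/\ 1 <= m, divider_wins m s t &
                 forall k, 1 <= k -> k < m -> ~ divider_wins k s t]
  end.

Definition separates (S : {set T}) (s t : T) : bool :=
  [&& s \notin S, t \notin S &
      ~~ connect [rel x y | [&& e x y, x \notin S & y \notin S]] s t].

(* lambda_G(s,t), None = +infinity *)
Definition lambda_G (s t : T) : option nat :=
  if (s == t) || e s t then None
  else Some (\big[minn/#|T|]_(S : {set T} | separates S s t) #|S|).

End Rendezvous.

From mathcomp Require Import all_boot zify.

(* Let s, t be distinct and non-adjacent and let L be the least size of an
   (s,t)-separator S.
   - Divider wins with L agents: he places one agent on each vertex of a
     minimum separator and never moves; R and J stay in the components of s
     and t in G - S ([divider_wins_sep]).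
   - Facilitator wins against k < L agents: J stays on t while R, standing at
     x, moves to a free vertex of the boundary of the component C(x) of t in
     G - N[x]. That boundary separates s from t, so it has more than k
     vertices and one of them is free. In a chordal graph it is moreover a
     clique ([boundary_clique], from [chordal_no_detour]), so the component
     of t strictly shrinks at each move ([away_comp_shrink]) until R becomes
     adjacent to t and steps onto it ([facilitator_wins]). *)

Set Implicit Arguments.
Unset Strict Implicit.
Unset Printing Implicit Defensive.

Section Walks.
Variables (T : finType) (e : rel T) (x0 : T).
Hypothesis simple : simple_graph e.

Let esym : symmetric e := proj1 simple.
Let eirr x : e x x = false. Proof. exact: (proj2 simple). Qed.

Definition walk (w : seq T) : Prop :=
  forall i, i.+1 < size w -> e (nth x0 w i) (nth x0 w i.+1).

Definition chordless_path (w : seq T) : Prop :=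
  walk w /\
  (forall i j, i < size w -> j < size w -> i.+2 <= j ->
     ~~ e (nth x0 w i) (nth x0 w j)).

Lemma chordless_adj w i j : chordless_path w -> i < size w -> j < size w ->
  e (nth x0 w i) (nth x0 w j) = (j == i.+1) || (i == j.+1).
Proof.
move=> [adj nonadj] hi hj.
case: (ltngtP i j) => [lt_ij | lt_ji | ->]; last by rewrite eirr (ltn_eqF (ltnSn j)).
- case: (eqVneq j i.+1) => [ji | ne]; first by subst j; rewrite adj ?eqxx.
  by rewrite (negbTE (nonadj i j _ _ _)) //; lia.
- case: (eqVneq i j.+1) => [ij | ne]; first by subst i; rewrite esym adj ?eqxx ?orbT.
  by rewrite esym (negbTE (nonadj j i _ _ _)) //; lia.
Qed.

Lemma chordless_uniq w :
  chordless_path w -> head x0 w != last x0 w -> uniq w.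
Proof.
move=> [adj nonadj] ends; apply: contraT => /(uniqPn x0) [i [j [lt_ij lt_j eq_ij]]].
case: (ltnP j.+1 (size w)) => [lt_j1 | ge_j1].
  by have := nonadj i j.+1 (ltn_trans lt_ij lt_j) lt_j1 lt_ij; rewrite eq_ij adj.
have j_last : j.+1 = size w by apply/eqP; rewrite eqn_leq lt_j ge_j1.
case: i lt_ij eq_ij => [|i] lt_ij eq_ij.
  by move: ends; rewrite -nth0 -nth_last -j_last eq_ij eqxx.
have := nonadj i j (ltn_trans (ltnSn i) (ltn_trans lt_ij lt_j)) lt_j lt_ij.
by rewrite -eq_ij adj //; lia.
Qed.

Lemma close_induced_cycle r w :
  chordless_path w -> 3 <= size w -> uniq w -> r \notin w ->
  (forall j, j < size w -> e r (nth x0 w j) = (j == 0) || (j.+1 == size w)) ->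
  induced_cycle e (r :: w).
Proof.
move=> cw sw uw rw side; split => //=; first by rewrite rw uw.
move=> x1 i j; rewrite !ltnS => hi hj.
have mod1 : 1 %% (size w).+1 = 1 by rewrite modn_small // ltnS (leq_trans _ sw).
have mod2 a : a < size w -> a.+2 %% (size w).+1 = if a.+1 == size w then 0 else a.+2.
  move=> ha; case: eqP => [<- | /eqP ne]; first exact: modnn.
  by rewrite modn_small // !ltnS ltn_neqAle ne ha.
have next_eq a b : a < size w -> b < size w ->
    (b.+1 == a.+2 %% (size w).+1) = (b == a.+1).
  move=> ha hb; rewrite mod2 //.
  by case: (a.+1 =P size w) hb => [<- hb | _ _] //; rewrite (ltn_eqF hb).
case: i hi => [|i] hi; case: j hj => [|j] hj /=.
- by rewrite eirr mod1.
- rewrite mod1 mod2 // (set_nth_default x0) // side //.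
  by case: (_ == size w); rewrite ?orbT ?orbF.
- rewrite mod1 mod2 // (set_nth_default x0) // esym side // orbC.
  by case: (_ == size w); rewrite ?orbT ?orbF.
- by rewrite !next_eq // !(set_nth_default x0) // chordless_adj.
Qed.

Lemma path_walk x p : path e x p -> walk (x :: p).
Proof. by move/(pathP x0) => ep i; apply: ep. Qed.

Lemma walk_size3 u v w : walk w -> head x0 w = u -> last x0 w = v ->
  u != v -> ~~ e u v -> 2 < size w.
Proof.
case: w => [|a [|b [|c w]]] ww //= <- <-; rewrite ?eqxx //.
by move=> _; rewrite (ww 0).
Qed.

Lemma shortcut_walk w i j (w' := take i.+1 w ++ drop j w) :
  walk w -> i.+2 <= j -> j < size w -> e (nth x0 w i) (nth x0 w j) ->
  [/\ walk w', size w' < size w, head x0 w' = head x0 w,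
      last x0 w' = last x0 w & {subset w' <= w}].
Proof.
move=> ww lt_ij lt_j chord.
have size_w' : size w' = i.+1 + (size w - j).
  by rewrite size_cat size_takel ?size_drop //; lia.
have nth_w' l : nth x0 w' l = if l <= i then nth x0 w l else nth x0 w (j + (l - i.+1)).
  rewrite nth_cat size_takel; last lia.
  by rewrite ltnS; case: leqP => hl; [rewrite nth_take | rewrite nth_drop].
split.
- move=> l; rewrite size_w' => hl; rewrite !nth_w'.
  case: (ltngtP l i) => [lt_li | lt_il | ->]; last by rewrite subnn addn0.
  + by apply: ww; lia.
  + have -> : j + (l.+1 - i.+1) = (j + (l - i.+1)).+1 by lia.
    by apply: ww; lia.
- by rewrite size_w'; lia.
- by rewrite -!nth0 nth_w'.
- by rewrite -!nth_last nth_w' size_w' ifF; [congr nth | ]; lia.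
- by move=> x; rewrite mem_cat => /orP [/mem_take | /mem_drop].
Qed.

End Walks.

Section Detours.
Variables (T : finType) (e : rel T).
Hypotheses (simple : simple_graph e) (chordal_e : chordal e).

Let eirr x : e x x = false. Proof. exact: (proj2 simple). Qed.

Lemma chordless_detour_cycle r u v w :
  e r u -> e r v -> u != v -> ~~ e u v ->
  chordless_path e u w -> head u w = u -> last u w = v ->
  (forall x, x \in w -> [|| x == u, x == v | (x != r) && ~~ e r x]) ->
  induced_cycle e (r :: w).
Proof.
move=> eru erv neq_uv neuv cw hw lw mem_w.
have uw : uniq w by apply: chordless_uniq cw _; rewrite hw lw.
apply: (close_induced_cycle simple cw _ uw) => //.
  exact: walk_size3 (proj1 cw) hw lw neq_uv neuv.
  apply/negP => /mem_w; rewrite eqxx andFb orbF.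
  by case/orP => /eqP r_end; [move: eru | move: erv]; rewrite r_end eirr.
move=> j hj; have w_pos : 0 < size w := leq_ltn_trans (leq0n j) hj.
case: (posnP j) => [-> | j_pos]; first by rewrite nth0 hw eru.
case: (eqVneq j.+1 (size w)) => [last_j | ne_j].
  have -> : nth u w j = v by rewrite -lw -nth_last -last_j.
  by rewrite erv orbT.
have neq_u : nth u w j != u.
  by rewrite -{2}hw -nth0 nth_uniq // -lt0n.
have neq_v : nth u w j != v.
  by rewrite -lw -nth_last nth_uniq ?prednK // -eqSS prednK.
move: (mem_w _ (mem_nth u hj)); rewrite (negbTE neq_u) (negbTE neq_v) /=.
by case/andP => _ /negbTE ->.
Qed.

Lemma chordal_no_detour r u v w :
  e r u -> e r v -> u != v -> ~~ e u v ->
  walk e u w -> head u w = u -> last u w = v ->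
  ~ (forall x, x \in w -> [|| x == u, x == v | (x != r) && ~~ e r x]).
Proof.
move=> eru erv neq_uv neuv.
have [n] := ubnP (size w); elim: n w => // n IH w /ltnSE size_w ww hw lw mem_w.
case: (boolP [exists i : 'I_(size w), exists j : 'I_(size w),
                (i.+2 <= j) && e (nth u w i) (nth u w j)]).
  case/existsP => i /existsP [j /andP [lt_ij chord]].
  have [ww' lt_size hw' lw' sub'] := shortcut_walk ww lt_ij (ltn_ord j) chord.
  apply: (IH _ (leq_trans lt_size size_w) ww'); rewrite ?hw' ?lw' //.
  by move=> x /sub' /mem_w.
move/existsPn => no_chord.
have cw : chordless_path e u w.
  split=> // i j hi hj lt_ij; apply/negP => chord.
  by have /existsPn /(_ (Ordinal hj)) := no_chord (Ordinal hi); rewrite /= lt_ij chord.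
exact: (chordal_e (chordless_detour_cycle eru erv neq_uv neuv cw hw lw mem_w)).
Qed.

End Detours.

Lemma connect_preserved (T : finType) (R : rel T) (P : pred T) x y :
  P x -> (forall a b, P a -> R a b -> P b) -> connect R x y -> P y.
Proof.
move=> Px HP /connectP [p]; elim: p x Px => [|z p IH] x Px /=; first by move=> _ ->.
by case/andP => Rxz; apply: IH (HP _ _ Px Rxz).
Qed.

Section Components.
Variables (T : finType) (e : rel T).
Hypothesis simple : simple_graph e.

Let esym : symmetric e := proj1 simple.

Definition in_nbhd (r y : T) : bool := (y == r) || e r y.

Definition away_rel (r : T) : rel T :=
  [rel a b | [&& e a b, ~~ in_nbhd r a & ~~ in_nbhd r b]].

Definition away_comp (r t : T) : {set T} := [set y | connect (away_rel r) t y].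

Definition boundary (C : {set T}) : {set T} :=
  [set z | (z \notin C) && [exists y in C, e z y]].

Lemma away_rel_sym r : symmetric (away_rel r).
Proof. by move=> a b; rewrite /away_rel /= esym [~~ _ && _]andbC. Qed.

Lemma away_comp_self r t : t \in away_comp r t.
Proof. by rewrite inE connect0. Qed.

Lemma away_comp_out r t y :
  ~~ in_nbhd r t -> y \in away_comp r t -> ~~ in_nbhd r y.
Proof.
move=> rt; rewrite inE.
by apply: (connect_preserved (P := fun y => ~~ in_nbhd r y)) rt _ => a b _ /and3P [].
Qed.

Lemma boundary_adj r t z :
  ~~ in_nbhd r t -> z \in boundary (away_comp r t) -> e r z.
Proof.
move=> rt; rewrite inE => /andP [zC /existsP [y /andP [yC ezy]]].
have ry := away_comp_out rt yC.
case: (boolP (in_nbhd r z)) => [/orP [/eqP zr | //] | rz].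
  by move: ry; rewrite /in_nbhd -zr ezy orbT.
move: yC zC; rewrite !inE => ty /negP []; apply: connect_trans ty (connect1 _).
by rewrite /away_rel /= esym ezy ry rz.
Qed.

Section Chordal.
Hypothesis chordal_e : chordal e.

(* In a chordal graph the boundary of a component of G - N[r] is a clique:
   two non-adjacent boundary vertices would be joined, through the component,
   by a walk avoiding N[r], against [chordal_no_detour]. *)
Lemma boundary_clique r t u v : ~~ in_nbhd r t ->
  u \in boundary (away_comp r t) -> v \in boundary (away_comp r t) ->
  u != v -> e u v.
Proof.
move=> rt bu bv neq_uv; apply: contraT => neuv.
have eru := boundary_adj rt bu; have erv := boundary_adj rt bv.
move: bu bv; rewrite !inE => /andP [_ /existsP [a /andP [aC eua]]].
move=> /andP [_ /existsP [b /andP [bC evb]]].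
have /connectP [p pp lp] : connect (away_rel r) a b.
  move: aC bC; rewrite !inE => ta; apply: connect_trans.
  by rewrite (sym_connect_sym (away_rel_sym r)).
have walk_w : walk e u (u :: rcons (a :: p) v).
  apply: path_walk; rewrite rcons_path /= eua -lp esym evb andbT.
  by apply: sub_path pp => x y /and3P [].
exfalso; apply: (chordal_no_detour simple chordal_e eru erv neq_uv neuv walk_w) => //.
  by rewrite /= last_rcons.
move=> x; rewrite in_cons mem_rcons in_cons => /or3P [-> // | -> | xp].
  by rewrite orbT.
have : x \in away_comp r t.
  by move: aC; rewrite !inE => ta; apply: connect_trans ta (path_connect pp xp).
by move/(away_comp_out rt); rewrite /in_nbhd negb_or => ->; rewrite !orbT.
Qed.

Lemma away_comp_shrink r t x : ~~ in_nbhd r t ->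
  x \in boundary (away_comp r t) -> ~~ in_nbhd x t ->
  away_comp x t \proper away_comp r t.
Proof.
move=> rt bx xt; apply/properP; split.
  apply/subsetP => y; rewrite inE.
  apply: (connect_preserved (P := fun a => a \in away_comp r t)) (away_comp_self r t) _.
  move=> a b aC /and3P [eab _ xb].
  apply: contraT => bC.
  have bb : b \in boundary (away_comp r t).
    by rewrite inE bC; apply/existsP; exists a; rewrite aC esym.
  case: (eqVneq x b) => [xb_eq | neq_xb]; first by move: xb; rewrite xb_eq /in_nbhd eqxx.
  by move: xb; rewrite /in_nbhd (boundary_clique rt bx bb neq_xb) orbT.
move: bx; rewrite inE => /andP [_ /existsP [y /andP [yC exy]]].
exists y => //; apply/negP => /(away_comp_out xt).
by rewrite /in_nbhd exy orbT.
Qed.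

End Chordal.

Lemma boundary_separates (C : {set T}) s t :
  t \in C -> s \notin C -> (forall c, c \in C -> ~~ e s c) ->
  separates e (boundary C) s t.
Proof.
move=> tC sC s_far; apply/and3P; split.
- rewrite inE sC /=; apply/existsP => -[y /andP [yC esy]].
  by move: (s_far y yC); rewrite esy.
- by rewrite inE tC.
apply/negP => conn; suff : t \notin C by rewrite tC.
apply: (connect_preserved (P := fun a => a \notin C)) sC _ conn.
move=> a b aC /and3P [eab aB _]; apply/negP => bC.
by move: aB; rewrite inE aC /= => /negP; apply; apply/existsP; exists b; rewrite bC.
Qed.

End Components.

Section DividerStrategy.
Variables (T : finType) (e : rel T).
Hypothesis esym : symmetric e.

Definition cover (S : {set T}) : {ffun 'I_#|S| -> T} := [ffun i => enum_val i].

Lemma cover_in (S : {set T}) i : cover S i \in S.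
Proof. by rewrite ffunE enum_valP. Qed.

Lemma cover_occupied (S : {set T}) v : occupied (cover S) v = (v \in S).
Proof.
apply/existsP/idP => [[i /eqP <-] | vS]; first exact: cover_in.
by exists (enum_rank_in vS v); rewrite ffunE enum_rankK_in.
Qed.

Lemma moves_avoiding (S : {set T}) (x : nat -> T) N :
  x 0 \notin S ->
  (forall m, m < N -> step e (x m) (x m.+1) && (x m.+1 \notin S)) ->
  connect [rel a b | [&& e a b, a \notin S & b \notin S]] (x 0) (x N)
  && (x N \notin S).
Proof.
move=> x0S moves; elim: N moves => [|N IH] moves; first by rewrite connect0.
case/andP: (IH (fun m lt_m => moves m (ltnW lt_m))) => conn xS.
case/andP: (moves N (ltnSn N)) => /orP [/eqP <- | eN] xS'; first by rewrite conn.
rewrite xS' andbT; apply: connect_trans conn (connect1 _).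
by rewrite /= eN xS xS'.
Qed.

(* Divider wins with #|S| agents by occupying a separator [S] forever: R and
   J can then never leave the components of [s] and [t] in G - S. *)
Lemma divider_wins_sep (S : {set T}) s t :
  separates e S s t -> divider_wins e #|S| s t.
Proof.
move=> /and3P [sS tS no_conn].
exists (cover S), (fun _ => cover S); split.
  by move=> i; split; apply/eqP => agent_i; [move: sS | move: tS];
     rewrite -agent_i cover_in.
move=> r j r0 j0 N legal.
have pos m : dpos (cover S) (fun _ => cover S) r j m = cover S by case: m.
have r0S : r 0 \notin S by rewrite r0.
have j0S : j 0 \notin S by rewrite j0.
have r_moves m : m < N -> step e (r m) (r m.+1) && (r m.+1 \notin S).
  by move=> lt_m; case: (legal m lt_m); rewrite pos !cover_occupied => -> ->.
have j_moves m : m < N -> step e (j m) (j m.+1) && (j m.+1 \notin S).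
  by move=> lt_m; case: (legal m lt_m); rewrite pos !cover_occupied => _ _ -> ->.
have /andP [r_stays _] := moves_avoiding r0S r_moves.
have /andP [j_stays _] := moves_avoiding j0S j_moves.
rewrite r0 in r_stays; rewrite j0 in j_stays.
split.
  apply: contra no_conn => /eqP meet; apply: connect_trans r_stays _.
  rewrite meet (sym_connect_sym _) // => x y.
  by rewrite /= esym [(x \notin S) && _]andbC.
move=> m lt_m i; rewrite !pos.
case: (legal m lt_m); rewrite pos !cover_occupied => _ rS _ jS.
split; [by rewrite /step eqxx | apply: contraNneq rS => <- | apply: contraNneq jS => <-];
  exact: cover_in.
Qed.

End DividerStrategy.

Lemma free_vertex (T : finType) k (p : {ffun 'I_k -> T}) (P : {set T}) :
  k < #|P| -> exists2 y, y \in P & ~~ occupied p y.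
Proof.
move=> small; apply/exists_inP; apply: contraTT small => /exists_inPn free.
have cover_P : P \subset [set p i | i : 'I_k].
  by apply/subsetP => y /free /negbNE /existsP [i /eqP <-]; apply: imset_f.
rewrite -leqNgt (leq_trans (subset_leq_card cover_P)) //.
by rewrite (leq_trans (leq_imset_card _ _)) // card_ord.
Qed.

Section FacilitatorStrategy.
Variables (T : finType) (e : rel T) (s t : T) (k : nat).
Hypotheses (simple : simple_graph e) (chordal_e : chordal e).
Hypothesis s_far : ~~ in_nbhd e s t.
Hypothesis large_separators : forall S, separates e S s t -> k < #|S|.

Definition chase (p : {ffun 'I_k -> T}) (x : T) : T :=
  if in_nbhd e x t then t
  else odflt x [pick y in boundary e (away_comp e x t) | ~~ occupied p y].

Definition potential (x : T) : nat :=
  if x == t then 0 else if e x t then 1 else #|away_comp e x t|.+2.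

Definition chase_inv (x : T) : bool :=
  in_nbhd e x t || (away_comp e x t \subset away_comp e s t).

Lemma chase_inv_s : chase_inv s.
Proof. by rewrite /chase_inv subxx orbT. Qed.

(* While the invariant holds and R is far from [t], the boundary of the
   component of [t] in G - N[x] separates [s] from [t]; it is therefore
   larger than Divider's team and has a free vertex. *)
Lemma chase_target (p : {ffun 'I_k -> T}) x : chase_inv x -> ~~ in_nbhd e x t ->
  exists2 y, y \in boundary e (away_comp e x t) & ~~ occupied p y.
Proof.
move=> inv_x x_far; apply/free_vertex/large_separators.
have sub_C : away_comp e x t \subset away_comp e s t.
  by move: inv_x; rewrite /chase_inv (negbTE x_far).
have s_out c : c \in away_comp e x t -> ~~ in_nbhd e s c.
  by move=> cC; apply: away_comp_out s_far (subsetP sub_C c cC).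
apply: boundary_separates (away_comp_self e x t) _ _.
  by apply/negP => /s_out; rewrite /in_nbhd eqxx.
by move=> c /s_out; rewrite /in_nbhd negb_or => /andP [].
Qed.

Lemma chase_step (p : {ffun 'I_k -> T}) x : ~~ occupied p t -> chase_inv x -> x != t ->
  [/\ step e x (chase p x), ~~ occupied p (chase p x),
      chase_inv (chase p x) & potential (chase p x) < potential x].
Proof.
move=> t_free inv_x x_t; rewrite /chase /potential (negbTE x_t).
have inv_t : chase_inv t by rewrite /chase_inv /in_nbhd eqxx.
case: ifPn => [/orP [/eqP t_x | xt] | x_far]; first by rewrite t_x eqxx in x_t.
  by rewrite eqxx xt; split=> //; rewrite /step xt orbT.
have /negbTE -> : ~~ e x t by move: x_far; rewrite /in_nbhd negb_or => /andP [].
have [y yB y_free] := chase_target p inv_x x_far.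
case: pickP => [z /andP [zB z_free] | none]; last by have := none y; rewrite yB y_free.
have z_t : z != t by apply: contraTneq zB => ->; rewrite inE away_comp_self.
have step_xz : step e x z by rewrite /step (boundary_adj simple x_far zB) orbT.
rewrite /= (negbTE z_t); case: (boolP (in_nbhd e z t)) => [zt | z_far].
  have -> : e z t by move: zt; rewrite /in_nbhd eq_sym (negbTE z_t).
  by split; rewrite // /chase_inv zt.
have /negbTE -> : ~~ e z t by move: z_far; rewrite /in_nbhd negb_or => /andP [].
have shrink := away_comp_shrink simple chordal_e x_far zB z_far.
split; rewrite ?ltnS ?proper_card //; rewrite /chase_inv (negbTE z_far) /=.
apply: subset_trans (proper_sub shrink) _.
by move: inv_x; rewrite /chase_inv (negbTE x_far).
Qed.

Lemma chase_t p : chase p t = t.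
Proof. by rewrite /chase /in_nbhd eqxx. Qed.

Lemma potential_eq0 x : (potential x == 0) = (x == t).
Proof. by rewrite /potential; case: (eqVneq x t) => // _; case: ifP. Qed.

Section Game.
Variables (d0 : {ffun 'I_k -> T}) (sigma : seq (T * T) -> {ffun 'I_k -> T}).

Definition reply (h : seq T) : {ffun 'I_k -> T} :=
  if size h <= 1 then d0 else sigma [seq (x, t) | x <- h].

Fixpoint history (n : nat) : seq T :=
  if n is n'.+1 then
    rcons (history n') (chase (reply (history n')) (last s (history n')))
  else [:: s].

Definition rpos (n : nat) : T := last s (history n).
Definition jpos (n : nat) : T := t.
Definition dplace (n : nat) : {ffun 'I_k -> T} := dpos d0 sigma rpos jpos n.

Lemma history_mkseq n : history n = mkseq rpos n.+1.
Proof. by elim: n => [|n IH] //; rewrite mkseqS -IH /rpos /= last_rcons. Qed.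

Lemma rpos_succ n : rpos n.+1 = chase (dplace n) (rpos n).
Proof.
rewrite {1}/rpos /= last_rcons -/(rpos n) /dplace /reply history_mkseq size_mkseq.
by case: n => // n; rewrite /mkseq -map_comp.
Qed.

Definition legal_move (m : nat) : Prop :=
  [/\ step e (rpos m) (rpos m.+1), ~~ occupied (dplace m) (rpos m.+1),
      step e (jpos m) (jpos m.+1) & ~~ occupied (dplace m) (jpos m.+1)].

Hypothesis d0_off_t : forall i, d0 i != t.
Hypothesis divider_legal : forall N, (forall m, m < N -> legal_move m) ->
  forall m, m < N -> forall i, dplace m.+1 i != t.

Lemma dplace_off_t m :
  (forall m', m' < m -> legal_move m') -> ~~ occupied (dplace m) t.
Proof.
move=> legal; apply/existsPn; case: m legal => [|m] legal i; first exact: d0_off_t.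
exact: divider_legal legal m (ltnSn m) i.
Qed.

Lemma chase_progress m :
  [/\ forall m', m' < m -> legal_move m', chase_inv (rpos m) &
      rpos m = t \/ potential (rpos m) + m <= potential s].
Proof.
elim: m => [|m [legal inv_m progress]].
  by split=> //; [exact: chase_inv_s | right; rewrite addn0].
have t_free := dplace_off_t legal.
have stay : step e t t by rewrite /step eqxx.
suff [legal_m inv_m1 progress_m1] : [/\ legal_move m, chase_inv (rpos m.+1) &
    rpos m.+1 = t \/ potential (rpos m.+1) + m.+1 <= potential s].
  by split=> // m'; rewrite ltnS leq_eqVlt => /orP [/eqP -> | /legal].
rewrite /legal_move /jpos rpos_succ; case: (eqVneq (rpos m) t) => [-> | r_t].
  by rewrite chase_t; split; [split | rewrite /chase_inv /in_nbhd eqxx | left].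
have [step_m free_m inv_next lt_next] := chase_step t_free inv_m r_t.
split=> //; right; case: progress => [/eqP | le_m]; first by rewrite (negbTE r_t).
by rewrite addnS; apply: leq_trans le_m; rewrite ltn_add2r.
Qed.

Lemma facilitator_meets :
  exists N, (forall m, m < N -> legal_move m) /\ rpos N = t.
Proof.
exists (potential s); have [legal _ progress] := chase_progress (potential s).
split=> //; case: progress => // le_s; apply/eqP; rewrite -potential_eq0.
by rewrite -leqn0 -(leq_add2r (potential s)) add0n.
Qed.

End Game.

Lemma facilitator_wins : ~ divider_wins e k s t.
Proof.
move=> [d0 [sigma [d0_ok win]]].
have win_play := win (rpos d0 sigma) jpos erefl erefl.
have d0_off_t i : d0 i != t by case: (d0_ok i).
have divider_legal N : (forall m, m < N -> legal_move d0 sigma m) ->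
    forall m, m < N -> forall i, dplace d0 sigma m.+1 i != t.
  by move=> legal m lt_m i; case: ((win_play N legal).2 m lt_m i).
have [N [legal meet]] := facilitator_meets d0_off_t divider_legal.
by case: (win_play N legal); rewrite meet eqxx.
Qed.

End FacilitatorStrategy.

Lemma bigmin_le (I : finType) (P : pred I) (F : I -> nat) m i :
  P i -> \big[minn/m]_(j | P j) F j <= F i.
Proof.
move=> Pi; have : i \in index_enum I by rewrite mem_index_enum.
elim: (index_enum I) => [|a r IH] //; rewrite inE big_cons => /orP [/eqP <- | ir].
  by rewrite Pi geq_minl.
by case: (P a); rewrite ?geq_min IH ?orbT.
Qed.

Lemma bigmin_attained (I : finType) (P : pred I) (F : I -> nat) m :
  \big[minn/m]_(j | P j) F j = m \/
  exists2 i, P i & \big[minn/m]_(j | P j) F j = F i.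
Proof.
elim/big_rec: _ => [|j x Pj [-> | [i Pi ->]]]; first by left.
- by case: (leqP (F j) m) => h; [right; exists j | left].
- by case: (leqP (F j) (F i)) => h; right; [exists j | exists i].
Qed.

Section Separators.
Variables (T : finType) (e : rel T).

Lemma trivial_separator s t : s != t -> ~~ e s t ->
  separates e [set x | (x != s) && (x != t)] s t.
Proof.
move=> s_t no_st; apply/and3P; split; rewrite ?inE ?eqxx ?andbF //.
apply/negP => conn; move: s_t; rewrite eq_sym; apply/negP/negPn.
apply: (connect_preserved (P := fun a => a == s)) (eqxx s) _ conn => a b /eqP -> /=.
case/and3P => sb _; rewrite inE negb_and !negbK => /orP [] // /eqP b_t.
by move: no_st; rewrite -b_t sb.
Qed.

Lemma separator_nonempty (S : {set T}) s t :
  connected_graph e -> separates e S s t -> 0 < #|S|.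
Proof.
move=> connected; rewrite card_gt0; apply: contraTneq => ->.
apply/negP => /and3P [_ _ /negP]; apply.
by rewrite (@eq_connect _ _ e) ?connected // => x y /=; rewrite !inE andbT.
Qed.

Lemma min_separator s t : s != t -> ~~ e s t ->
  exists2 S0, separates e S0 s t &
    \big[minn/#|T|]_(S | separates e S s t) #|S| = #|S0|.
Proof.
move=> s_t no_st.
have sep1 := trivial_separator s_t no_st.
case: (bigmin_attained (fun S => separates e S s t) (fun S : {set T} => #|S|) #|T|).
  move=> L_T; exists [set x | (x != s) && (x != t)] => //; apply/eqP.
  by rewrite eqn_leq (bigmin_le (P := fun S => separates e S s t)) // L_T max_card.
by case=> S0 sep0 L_S0; exists S0.
Qed.

End Separators.

Theorem mainTheorem8 (T : finType) (e : rel T) :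
  simple_graph e -> connected_graph e -> chordal e ->
  forall s t : T, d_G_is e s t (lambda_G e s t).
Proof.
move=> simple connected chordal_e s t.
rewrite /d_G_is /lambda_G; case: (boolP ((s == t) || e s t)) => // /norP [s_t no_st].
have L_min S : separates e S s t ->
    \big[minn/#|T|]_(S' | separates e S' s t) #|S'| <= #|S|.
  exact: (bigmin_le (P := fun S' => separates e S' s t)).
have [S0 sep0 L_S0] := min_separator s_t no_st.
rewrite L_S0 in L_min *; split.
- exact: separator_nonempty connected sep0.
- exact: (divider_wins_sep (proj1 simple) sep0).
- move=> k _ k_lt; apply: (facilitator_wins simple chordal_e) => [|S sep].
    by rewrite /in_nbhd negb_or eq_sym s_t.
  exact: leq_trans k_lt (L_min S sep).
Qed.
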